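(* For every $k\ge1$ for which $\beta_0,\dots,\beta_k$ are defined, the subgroup $\Gamma_k=\langle\beta_0,\beta_1,\dots,\beta_k\rangle$ of $\mathbb{Q}$ equals $\frac{1}{Q_k}\mathbb{Z}$.
   Context: Setting: $k$ (the field) is algebraically closed of characteristic $0$; $\nu^*$ is a $k$-valuation of a function field $K^*$ of transcendence degree $2$ whose value group is a subgroup of $\mathbb{Q}$ and whose residue field is $k$; $S$ is an algebraic two-dimensional regular local ring with quotient field $K^*$ dominated by $V^*$, with regular parameters $(x,y)$, and $\nu^*(x)=1$. Jumping polynomials: $T_0=x$, $T_1=y$, $q_0=\infty$, $p_1,q_1$ coprime positive integers with $\nu^*(y)=p_1/q_1$; for $i\ge1$, $n_{i,j}$ ($0\le j<i$) are nonnegative integers with $n_{i,j}<q_j$ and $q_i\nu^*(T_i)=\sum_{j<i}n_{i,j}\nu^*(T_j)$, $\lambda_i\in k$ is the residue of $T_i^{q_i}/\prod_{j<i}T_j^{n_{i,j}}$, $T_{i+1}=T_i^{q_i}-\lambda_i\prod_{j<i}T_j^{n_{i,j}}$, and $p_{i+1},q_{i+1}$ are coprime positive integers with $\nu^*(T_{i+1})=q_i\nu^*(T_i)+\frac{1}{q_1\cdots q_i}\frac{p_{i+1}}{q_{i+1}}$. Put $\beta_i=\nu^*(T_i)$, $Q_i=q_1\cdots q_i$. *)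

From HB Require Import structures.
From mathcomp Require Import all_boot all_order all_algebra.
Set Implicit Arguments. Unset Strict Implicit. Unset Printing Implicit Defensive.
Import Order.TTheory GRing.Theory Num.Theory.
Local Open Scope ring_scope.

Definition Qprod (q : nat -> nat) (k : nat) : nat := (\prod_(1 <= i < k.+1) q i)%N.

Definition rat_valuation (K : fieldType) (nu : K -> rat) : Prop :=
  (forall a b : K, a != 0 -> b != 0 -> nu (a * b) = nu a + nu b) /\
  (forall a b : K, a != 0 -> b != 0 -> a + b != 0 ->
      Num.min (nu a) (nu b) <= nu (a + b)).

(* The jumping polynomials T_0, ..., T_N (all nonzero, so beta_0..beta_N are
   defined), with the data p_i, q_i (i >= 1), n_{i,j}, lambda_i as in the paper.
   q 0 is unused (q_0 = infinity). *)
Definition jumping_data (K : fieldType) (nu : K -> rat) (x y : K)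
    (T : nat -> K) (lam : nat -> K) (p q : nat -> nat) (n : nat -> nat -> nat)
    (N : nat) : Prop :=
  [/\ [/\ T 0%N = x, T 1%N = y & nu x = 1],
      [/\ (0 < p 1%N)%N, (0 < q 1%N)%N, coprime (p 1%N) (q 1%N)
        & nu y = (p 1%N)%:R / (q 1%N)%:R],
      (forall i, (i <= N)%N -> T i != 0) &
      (forall i, (1 <= i < N)%N ->
        [/\ (forall j, (1 <= j < i)%N -> (n i j < q j)%N),
            (q i)%:R * nu (T i) = \sum_(j < i) (n i j)%:R * nu (T j),
            [/\ lam i != 0, nu (lam i) = 0 &
            T i.+1 = T i ^+ q i - lam i * \prod_(j < i) T j ^+ n i j],
            [/\ (0 < p i.+1)%N, (0 < q i.+1)%N & coprime (p i.+1) (q i.+1)] &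
            nu (T i.+1) = (q i)%:R * nu (T i)
                          + (Qprod q i)%:R^-1 * ((p i.+1)%:R / (q i.+1)%:R)])].

(* Write beta_i = nu (T_i).  The recursion for T_(i+1) gives
   beta_(i+1) = m_i beta_i + p_(i+1) / Q_(i+1) with m_0 = 0 and m_i = q_i for
   i >= 1, and Q_(i+1) = Q_i q_(i+1).  By induction every beta_i lies in
   (1/Q_i)Z, hence in (1/Q_k)Z for i <= k.  Conversely 1/Q_0 = beta_0, and if
   1/Q_k lies in Gamma_k then Gamma_(k+1) contains q_(k+1)/Q_(k+1) = 1/Q_k and
   p_(k+1)/Q_(k+1) = beta_(k+1) - m_k beta_k; as p_(k+1) and q_(k+1) are
   coprime, a Bezout combination gives 1/Q_(k+1). *)

From HB Require Import structures.
From mathcomp Require Import all_boot all_order all_algebra.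
Set Implicit Arguments. Unset Strict Implicit. Unset Printing Implicit Defensive.
Import Order.TTheory GRing.Theory Num.Theory.
Local Open Scope ring_scope.

Section IntegerCombinations.
Variables (R : pzRingType) (b : nat -> R).

Definition int_comb (k : nat) (r : R) : Prop :=
  exists c : 'I_k.+1 -> int, r = \sum_(i < k.+1) (c i)%:~R * b i.

Lemma int_combD k r s : int_comb k r -> int_comb k s -> int_comb k (r + s).
Proof.
move=> [c ->] [d ->]; exists (fun i => c i + d i).
by rewrite -big_split; apply: eq_bigr => i _; rewrite intrD mulrDl.
Qed.

Lemma int_combZ k z r : int_comb k r -> int_comb k (z%:~R * r).
Proof.
move=> [c ->]; exists (fun i => z * c i).
by rewrite mulr_sumr; apply: eq_bigr => i _; rewrite intrM mulrA.
Qed.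

Lemma int_comb_gen k i : (i <= k)%N -> int_comb k (b i).
Proof.
rewrite -ltnS => ik; exists (fun j => (j == Ordinal ik)%:R).
rewrite (bigD1 (Ordinal ik)) //= eqxx mul1r big1 ?addr0 // => j /negbTE ->.
by rewrite mul0r.
Qed.

Lemma int_combS k r : int_comb k r -> int_comb k.+1 r.
Proof.
move=> [c ->]; exists (fun j => if (j < k.+1)%N then c (inord j) else 0).
rewrite [RHS]big_ord_recr /= ltnn mul0r addr0; apply: eq_bigr => i _.
by rewrite /= ltn_ord inord_val.
Qed.

Lemma int_comb_coprime k (a c : nat) (d : R) :
  coprime a c -> int_comb k (a%:R * d) -> int_comb k (c%:R * d) ->
  int_comb k d.
Proof.
move=> /eqP ac ad cd; have [u [v uv]] := Bezoutz a c.
have -> : d = u%:~R * (a%:R * d) + v%:~R * (c%:R * d).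
  rewrite !mulrA -mulrDl !pmulrn -!intrM -intrD uv /gcdz /= ac.
  by rewrite mul1r.
by apply: int_combD; apply: int_combZ.
Qed.

End IntegerCombinations.

Section MultiplesOfInverse.
Variable F : numFieldType.

Definition multiple_of_inv (Q : nat) (r : F) : Prop :=
  exists z : int, r = z%:~R / Q%:R.

Lemma multiple_of_invD Q r s :
  multiple_of_inv Q r -> multiple_of_inv Q s -> multiple_of_inv Q (r + s).
Proof. by move=> [y ->] [z ->]; exists (y + z); rewrite intrD mulrDl. Qed.

Lemma multiple_of_invZ Q z r :
  multiple_of_inv Q r -> multiple_of_inv Q (z%:~R * r).
Proof. by move=> [y ->]; exists (z * y); rewrite intrM mulrA. Qed.

Lemma multiple_of_inv_dvd Q Q' r :
  (0 < Q')%N -> (Q %| Q')%N -> multiple_of_inv Q r -> multiple_of_inv Q' r.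
Proof.
move=> Q'_gt0 /dvdnP [m defQ'] [z ->]; exists (z * m).
have m_neq0 : m%:R != 0 :> F.
  by rewrite pnatr_eq0; apply: contraTneq Q'_gt0 => m0; rewrite defQ' m0.
by rewrite defQ' natrM intrM -pmulrn invfM mulrA -(mulrA _ m%:R) divff ?mulr1.
Qed.

Lemma int_comb_multiple_of_inv (b : nat -> F) Q k r :
  (forall i, (i <= k)%N -> multiple_of_inv Q (b i)) ->
  int_comb b k r -> multiple_of_inv Q r.
Proof.
move=> bQ [c ->]; apply: (big_ind (multiple_of_inv Q)) => [||i _].
- by exists 0; rewrite mul0r.
- exact: multiple_of_invD.
- by apply/multiple_of_invZ/bQ; rewrite -ltnS.
Qed.

End MultiplesOfInverse.

Lemma Qprod0 (q : nat -> nat) : Qprod q 0 = 1%N.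
Proof. by rewrite /Qprod big_geq. Qed.

Lemma QprodS (q : nat -> nat) k : Qprod q k.+1 = (Qprod q k * q k.+1)%N.
Proof. by rewrite /Qprod big_nat_recr. Qed.

Lemma Qprod_dvd (q : nat -> nat) i k : (i <= k)%N -> (Qprod q i %| Qprod q k)%N.
Proof.
by move=> ik; rewrite /Qprod [X in (_ %| X)%N](@big_cat_nat _ _ _ i.+1) ?dvdn_mulr.
Qed.

Section JumpingPolynomials.
Variables (K : fieldType) (nu : K -> rat) (x y : K) (T lam : nat -> K).
Variables (p q : nat -> nat) (n : nat -> nat -> nat) (N : nat).
Hypothesis jumping : jumping_data nu x y T lam p q n N.

Local Notation beta i := (nu (T i)).

Lemma beta0 : beta 0 = 1.
Proof. by case: jumping => -[-> _ ->]. Qed.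

Lemma beta_succ k : (k < N)%N ->
  [/\ (0 < q k.+1)%N, coprime (p k.+1) (q k.+1) &
      exists m : int, beta k.+1 = m%:~R * beta k + (p k.+1)%:R / (Qprod q k.+1)%:R].
Proof.
case: jumping => -[_ T1 _] [p1_gt0 q1_gt0 cop1 nuy] _ step kN.
case: k kN => [_ | k kN].
  split=> //; exists 0.
  by rewrite mul0r add0r T1 nuy QprodS Qprod0 mul1n.
have [_ _ _ [_ qk_gt0 copk] nuT] := step k.+1 kN.
split=> //; exists (q k.+1)%:Z.
by rewrite nuT -pmulrn (QprodS q k.+1) natrM invfM; congr (_ + _); apply: mulrCA.
Qed.

Lemma Qprod_gt0 k : (k <= N)%N -> (0 < Qprod q k)%N.
Proof.
elim: k => [|k IHk] kN; first by rewrite Qprod0.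
have [qk_gt0 _ _] := beta_succ kN.
by rewrite QprodS muln_gt0 qk_gt0 IHk // ltnW.
Qed.

Lemma beta_multiple_of_inv i : (i <= N)%N -> multiple_of_inv (Qprod q i) (beta i).
Proof.
elim: i => [|k IHk] kN.
  by exists 1; rewrite beta0 Qprod0 divr1.
have [_ _ [m ->]] := beta_succ kN.
apply: multiple_of_invD.
  have dvdQ := Qprod_dvd q (leqnSn k).
  exact/multiple_of_invZ/(multiple_of_inv_dvd (Qprod_gt0 kN) dvdQ)/IHk/ltnW.
by exists (p k.+1)%:Z; rewrite -pmulrn.
Qed.

Lemma inv_Qprod_int_comb k : (k <= N)%N ->
  int_comb (fun i => beta i) k (Qprod q k)%:R^-1.
Proof.
elim: k => [|k IHk] kN.
  by rewrite Qprod0 invr1 -beta0; apply: int_comb_gen.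
have [qk_gt0 copk [m betaS]] := beta_succ kN.
apply: (int_comb_coprime copk).
  have -> : (p k.+1)%:R * (Qprod q k.+1)%:R^-1 = beta k.+1 + (- m)%:~R * beta k.
    by rewrite betaS rmorphN mulNr addrAC subrr add0r.
  by apply: int_combD; [|apply: int_combZ]; apply: int_comb_gen.
have qk_neq0 : (q k.+1)%:R != 0 :> rat by rewrite pnatr_eq0 -lt0n.
rewrite QprodS natrM invfM mulrCA divff // mulr1.
exact/int_combS/IHk/ltnW.
Qed.

End JumpingPolynomials.

Theorem corollary5p4 (K : fieldType) (nu : K -> rat) (x y : K) (T lam : nat -> K)
    (p q : nat -> nat) (n : nat -> nat -> nat) (N : nat) :
  rat_valuation nu ->
  jumping_data nu x y T lam p q n N ->
  forall k : nat, (1 <= k <= N)%N ->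
  forall r : rat,
    (exists c : 'I_k.+1 -> int, r = \sum_(i < k.+1) (c i)%:~R * nu (T i)) <->
    (exists z : int, r = z%:~R / (Qprod q k)%:R).
Proof.
move=> _ jumping k /andP[_ kN] r.
change (int_comb (fun i => nu (T i)) k r <-> multiple_of_inv (Qprod q k) r).
split=> [|[z ->]]; last exact/int_combZ/(inv_Qprod_int_comb jumping kN).
apply: int_comb_multiple_of_inv => i ik.
apply: (multiple_of_inv_dvd (Qprod_gt0 jumping kN) (Qprod_dvd q ik)).
exact: (beta_multiple_of_inv jumping (leq_trans ik kN)).
Qed.
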